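(* Let $\mathcal{Y}$ be a subset of a Euclidean space $\mathbb{R}^d$, let $\mathfrak{C}$ be a polyhedral cover of $\mathcal{Y}$, and let $\mathcal{G}=\{g_1,\ldots,g_k\}$ be a vertex interpolation function basis for $\mathfrak{C}$. Define $\boldsymbol{g}:\bigcup_{C\in\mathfrak{C}}C\to\mathbb{R}^k$ by $\boldsymbol{g}(\boldsymbol{x}):=(g_1(\boldsymbol{x}),\ldots,g_k(\boldsymbol{x}))^\top$. If $V(\mathfrak{C})\subseteq\mathcal{Y}$, then $$\operatorname{conv}(\boldsymbol{g}(\mathcal{Y}))=\Big\{(z_1,\ldots,z_k)^\top:z_1\ge0,\ldots,z_k\ge0,\ \textstyle\sum_{j=1}^kz_j\le1\Big\},$$ i.e. $\operatorname{conv}(\boldsymbol{g}(\mathcal{Y}))$ is the $k$-simplex with vertices $\boldsymbol{0},\boldsymbol{e}_1,\ldots,\boldsymbol{e}_k$, where $\boldsymbol{e}_j$ is the $j$-th standard basis vector of $\mathbb{R}^k$.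
   Context: A convex $C'\subseteq C$ is a face of a convex set $C$ if $\lambda x_1+(1-\lambda)x_2\in C'$ with $0<\lambda<1$, $x_1,x_2\in C$ implies $x_1,x_2\in C'$; $x$ is an extreme point if $\{x\}$ is a face. A polyhedron is a finite intersection of closed half-spaces. A polyhedral cover of $\mathcal{Y}\subseteq\mathbb{R}^d$ is a finite collection $\mathfrak{C}$ of polyhedra, each with at least one extreme point, with $\bigcup_{C\in\mathfrak{C}}C\supseteq\mathcal{Y}$, such that whenever $C_1,C_2\in\mathfrak{C}$ intersect, $C_1\cap C_2$ is a face of both. $V(C)$ denotes the set of extreme points of $C$, $V(\mathfrak{C}):=\bigcup_{C\in\mathfrak{C}}V(C)$, and $\mathfrak{F}(\mathfrak{C})$ the set of non-empty faces of members of $\mathfrak{C}$. A vertex interpolation function set for $\mathfrak{C}$ is a family $\{g_{\boldsymbol{v}}:\bigcup_{C\in\mathfrak{C}}C\to\mathbb{R}\}_{\boldsymbol{v}\in V(\mathfrak{C})}$ with: (VIF1) $g_{\boldsymbol{v}}\ge0$; (VIF2) $g_{\boldsymbol{v}}(\boldsymbol{v}')=\mathbf{1}_{\{\boldsymbol{v}=\boldsymbol{v}'\}}$ for all $\boldsymbol{v},\boldsymbol{v}'\in V(\mathfrak{C})$; (VIF3) $\sum_{\boldsymbol{v}\in V(F)}g_{\boldsymbol{v}}(\boldsymbol{x})=1$ for every $F\in\mathfrak{F}(\mathfrak{C})$, $\boldsymbol{x}\in F$; (VIF4) $g_{\boldsymbol{v}}(\boldsymbol{x})=0$ for every $F\in\mathfrak{F}(\mathfrak{C})$,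 $\boldsymbol{x}\in F$, $\boldsymbol{v}\in V(\mathfrak{C})\setminus V(F)$. A vertex interpolation function basis for $\mathfrak{C}$ is a set consisting of all but one of the functions of some vertex interpolation function set for $\mathfrak{C}$. *)

From HB Require Import structures.
From mathcomp Require Import all_boot all_order all_algebra.
From mathcomp Require Import boolp classical_sets functions fsbigop reals.
Set Implicit Arguments. Unset Strict Implicit. Unset Printing Implicit Defensive.
Import Order.TTheory GRing.Theory Num.Theory.
Local Open Scope classical_set_scope.
Local Open Scope ring_scope.

Section Defs.
Variable R : realType.
Variable d : nat.
Local Notation pt := 'rV[R]_d.

Definition dotp (a x : pt) : R := \sum_(i < d) a 0 i * x 0 i.

Definition is_convex (C : set pt) : Prop :=
  forall x1 x2 (l : R), C x1 -> C x2 -> 0 <= l <= 1 ->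
    C (l *: x1 + (1 - l) *: x2).

Definition is_face (C C' : set pt) : Prop :=
  [/\ is_convex C', C' `<=` C &
   forall x1 x2 (l : R), C x1 -> C x2 -> 0 < l < 1 ->
     C' (l *: x1 + (1 - l) *: x2) -> C' x1 /\ C' x2].

Definition extreme_points (C : set pt) : set pt :=
  [set x | is_face C [set x]].

Definition is_polyhedron (C : set pt) : Prop :=
  exists (m : nat) (A : 'I_m -> pt) (b : 'I_m -> R),
    C = [set x | forall i, dotp (A i) x <= b i].

Definition cover_union (Cs : seq (set pt)) : set pt :=
  [set x | exists2 C, C \in Cs & C x].

Definition polyhedral_cover (Y : set pt) (Cs : seq (set pt)) : Prop :=
  [/\ forall C, C \in Cs -> is_polyhedron C /\ extreme_points C !=set0,
      Y `<=` cover_union Cs &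
      forall C1 C2, C1 \in Cs -> C2 \in Cs -> C1 `&` C2 !=set0 ->
        is_face C1 (C1 `&` C2) /\ is_face C2 (C1 `&` C2)].

Definition cover_vertices (Cs : seq (set pt)) : set pt :=
  [set v | exists2 C, C \in Cs & extreme_points C v].

Definition cover_faces (Cs : seq (set pt)) : set (set pt) :=
  [set F | F !=set0 /\ exists2 C, C \in Cs & is_face C F].

(* vertex interpolation function set {g_v}_{v in V(frak C)}; the functions are
   total on R^d but only their values on the union of the cover matter *)
Definition is_VIF_set (Cs : seq (set pt)) (g : pt -> pt -> R) : Prop :=
  let V := cover_vertices Cs in
  [/\ (forall v x, V v -> cover_union Cs x -> 0 <= g v x),
      (forall v v', V v -> V v' -> g v v' = (v == v')%:R),
      (forall F x, cover_faces Cs F -> F x ->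
         (\sum_(v \in extreme_points F) g v x) = 1) &
      (forall F x v, cover_faces Cs F -> F x -> V v ->
         ~ extreme_points F v -> g v x = 0)].

(* {g_1,...,g_k} is a vertex interpolation function basis: it is an
   enumeration (without repetition) of all functions but one of some
   vertex interpolation function set *)
Definition is_VIF_basis (Cs : seq (set pt)) (k : nat) (gs : 'I_k -> pt -> R)
  : Prop :=
  exists (g : pt -> pt -> R) (v0 : pt) (vs : 'I_k -> pt),
    [/\ is_VIF_set Cs g,
        cover_vertices Cs v0 /\ injective vs,
        (forall j, cover_vertices Cs (vs j) /\ vs j <> v0),
        (forall v, cover_vertices Cs v -> v <> v0 -> exists j, vs j = v) &
        (forall j x, cover_union Cs x -> gs j x = g (vs j) x)].

End Defs.

Definition conv_hull (R : realType) (n : nat) (S : set 'rV[R]_n) : set 'rV[R]_n :=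
  [set z | exists (m : nat) (w : 'I_m -> R) (p : 'I_m -> 'rV[R]_n),
     [/\ forall i, 0 <= w i, \sum_(i < m) w i = 1, forall i, S (p i) &
         z = \sum_(i < m) w i *: p i]].

Definition std_simplex (R : realType) (k : nat) : set 'rV[R]_k :=
  [set z | (forall j, 0 <= z 0 j) /\ \sum_(j < k) z 0 j <= 1].

Definition gvec (R : realType) (d k : nat) (gs : 'I_k -> 'rV[R]_d -> R)
  (x : 'rV[R]_d) : 'rV[R]_k := \row_(j < k) gs j x.

From mathcomp Require Import all_boot all_order all_algebra.
From mathcomp Require Import finmap boolp classical_sets functions fsbigop reals.
Set Implicit Arguments. Unset Strict Implicit. Unset Printing Implicit Defensive.
Import Order.TTheory GRing.Theory Num.Theory.
Local Open Scope classical_set_scope.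
Local Open Scope ring_scope.

(* Every y in Y lies in a member C of the cover, which (being a polyhedron) is
   convex and hence a face of itself.  By (VIF3) the g_v with v in V(C) sum to
   1 at y, by (VIF4) every other g_v vanishes at y, and all g_v are
   nonnegative; so g(y) lies in the simplex, and so does conv(g(Y)).
   Conversely, by (VIF2) the omitted vertex is sent to 0 and the vertex of g_j
   to e_j, and these k + 1 points span the simplex. *)

Lemma uniq_sub_ler_sum (R : numDomainType) (T : eqType) (r s : seq T)
    (F : T -> R) :
  uniq r -> uniq s -> {subset r <= s} -> (forall x, x \in s -> 0 <= F x) ->
  \sum_(x <- r) F x <= \sum_(x <- s) F x.
Proof.
move=> ur us rs F0.
have s_perm : perm_eq s (r ++ [seq x <- s | x \notin r]).
  apply: uniq_perm => // [|x].
    rewrite cat_uniq ur filter_uniq // andbT.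
    by apply/hasPn => x; rewrite mem_filter => /andP[].
  by rewrite mem_cat mem_filter; case: (boolP (x \in r)) => //= /rs ->.
rewrite (perm_big _ s_perm) big_cat /= lerDl big_filter big_seq_cond.
by apply: sumr_ge0 => x /andP[/F0].
Qed.

(* The hypothesis on the finitely supported sum forces finite support: over an
   infinite support [\sum_(x \in A)] is [0]. *)
Lemma ler_sum_fsum (R : numDomainType) (T : choiceType) (A : set T)
    (F : T -> R) (r : seq T) :
  \sum_(x \in A) F x != 0 -> (forall x, A x -> 0 <= F x) -> uniq r ->
  (forall x, x \in r -> F x != 0 -> A x) ->
  \sum_(x <- r) F x <= \sum_(x \in A) F x.
Proof.
case: finite_supportP => [_|X XA _ X_supp _ F0 ur rA]; first by rewrite big_nil eqxx.
rewrite (bigID [pred x | F x == 0]) /= big1 => [|x /eqP //].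
rewrite add0r -big_filter; apply: uniq_sub_ler_sum => [||x|x Xx].
- exact: filter_uniq.
- exact: fset_uniq.
- rewrite mem_filter => /andP[Fx rx].
  suff : [set` X] x by [].
  by rewrite X_supp; split; [exact: rA|exact/eqP].
- exact/F0/XA.
Qed.

Section ConvexGeometry.
Variables (R : realType) (d : nat).
Local Notation pt := 'rV[R]_d.

Lemma dotpDr (a x y : pt) : dotp a (x + y) = dotp a x + dotp a y.
Proof. by rewrite /dotp -big_split; apply: eq_bigr => i _; rewrite mxE mulrDr. Qed.

Lemma dotpZr (a x : pt) (c : R) : dotp a (c *: x) = c * dotp a x.
Proof.
by rewrite /dotp mulr_sumr; apply: eq_bigr => i _; rewrite mxE mulrCA.
Qed.

Lemma polyhedron_convex (C : set pt) : is_polyhedron C -> is_convex C.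
Proof.
case=> m [A [b ->]] x1 x2 l /= Cx1 Cx2 /andP[l_ge0 l_le1] i.
rewrite dotpDr !dotpZr.
have l'_ge0 : 0 <= 1 - l by rewrite subr_ge0.
apply: le_trans (lerD (ler_wpM2l l_ge0 (Cx1 i)) (ler_wpM2l l'_ge0 (Cx2 i))) _.
by rewrite -mulrDl addrC subrK mul1r.
Qed.

Lemma convex_face_refl (C : set pt) : is_convex C -> is_face C C.
Proof. by split. Qed.

Lemma extreme_point_mem (C : set pt) (v : pt) : extreme_points C v -> C v.
Proof. by case=> _ /(_ v erefl). Qed.

End ConvexGeometry.

Section VertexInterpolation.
Variables (R : realType) (d : nat) (Cs : seq (set 'rV[R]_d)).
Variable g : 'rV[R]_d -> 'rV[R]_d -> R.
Hypothesis g_VIF : is_VIF_set Cs g.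
Hypothesis Cs_convex : forall C, C \in Cs -> is_convex C.

Lemma cover_vertex_union (v : 'rV[R]_d) :
  cover_vertices Cs v -> cover_union Cs v.
Proof. by case=> C CsC /extreme_point_mem; exists C. Qed.

Lemma VIF_sum_le1 (r : seq 'rV[R]_d) (x : 'rV[R]_d) :
  cover_union Cs x -> uniq r -> (forall v, v \in r -> cover_vertices Cs v) ->
  \sum_(v <- r) g v x <= 1.
Proof.
case: g_VIF => g_ge0 _ g_sum1 g_supp [C CsC Cx] ur r_vert.
have C_face : cover_faces Cs C.
  split; first by exists x.
  by exists C => //; apply: convex_face_refl; apply: Cs_convex.
rewrite -(g_sum1 C x C_face Cx); apply: ler_sum_fsum => // [|v Cv|v rv].
- by rewrite g_sum1 ?oner_neq0.
- by apply: g_ge0; [exists C | exists C].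
- by apply: contra_neqP => /(g_supp C x v C_face Cx (r_vert v rv)).
Qed.

End VertexInterpolation.

Section Simplex.
Variables (R : realType) (k : nat).

Lemma conv_hull_sub_std_simplex (S : set 'rV[R]_k) :
  S `<=` @std_simplex R k -> conv_hull S `<=` @std_simplex R k.
Proof.
move=> S_simplex z [m [w [p [w_ge0 w_sum1 Sp ->]]]].
have p_simplex i := S_simplex _ (Sp i).
split=> [j|].
  rewrite summxE; apply: sumr_ge0 => i _.
  by rewrite mxE mulr_ge0 // (p_simplex i).1.
under eq_bigr do rewrite summxE.
rewrite exchange_big /= -w_sum1; apply: ler_sum => i _.
under eq_bigr do rewrite mxE.
by rewrite -mulr_sumr ler_piMr // (p_simplex i).2.
Qed.

Lemma std_simplex_sub_conv_hull (S : set 'rV[R]_k) :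
  S 0 -> (forall j, S (delta_mx 0 j)) -> @std_simplex R k `<=` conv_hull S.
Proof.
move=> S0 Se z [z_ge0 z_le1].
exists k.+1, (fun i => if unlift ord0 i is Some j then z 0 j
                      else 1 - \sum_(j < k) z 0 j),
  (fun i => if unlift ord0 i is Some j then delta_mx 0 j else 0).
split=> [i||i|]; first by case: unlift; rewrite ?subr_ge0.
- rewrite big_ord_recl unlift_none.
  by under [X in _ + X]eq_bigr do rewrite fintype.liftK; rewrite subrK.
- by case: unlift.
- rewrite big_ord_recl unlift_none scaler0 add0r; under eq_bigr do rewrite fintype.liftK.
  by rewrite [LHS]row_sum_delta.
Qed.

End Simplex.

Section VIFBasis.
Variables (R : realType) (d k : nat) (Cs : seq (set 'rV[R]_d)).
Variables (gs : 'I_k -> 'rV[R]_d -> R) (g : 'rV[R]_d -> 'rV[R]_d -> R).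
Variables (v0 : 'rV[R]_d) (vs : 'I_k -> 'rV[R]_d).
Hypothesis g_VIF : is_VIF_set Cs g.
Hypothesis v0_vertex : cover_vertices Cs v0.
Hypothesis vs_inj : injective vs.
Hypothesis vs_vertex : forall j, cover_vertices Cs (vs j) /\ vs j <> v0.
Hypothesis gsE : forall j x, cover_union Cs x -> gs j x = g (vs j) x.

Lemma gvec_std_simplex (x : 'rV[R]_d) :
  (forall C, C \in Cs -> is_convex C) -> cover_union Cs x ->
  @std_simplex R k (gvec gs x).
Proof.
case: g_VIF => g_ge0 _ _ _ Cs_convex Cx; split=> [j|].
  by rewrite mxE gsE //; apply: g_ge0 => //; exact: (vs_vertex j).1.
under eq_bigr do rewrite mxE gsE //.
rewrite -(big_map vs xpredT (g^~ x)) (VIF_sum_le1 g_VIF) //.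
  by rewrite map_inj_uniq // index_enum_uniq.
by move=> v /mapP[j _ ->]; exact: (vs_vertex j).1.
Qed.

Lemma gvec_omitted_vertex : gvec gs v0 = 0.
Proof.
case: g_VIF => _ g_delta _ _; apply/rowP => j.
rewrite !mxE gsE; last exact: cover_vertex_union.
rewrite (g_delta (vs j) v0) //; last exact: (vs_vertex j).1.
by case: eqP => // /(vs_vertex j).2.
Qed.

Lemma gvec_vertex (j : 'I_k) : gvec gs (vs j) = delta_mx 0 j.
Proof.
case: g_VIF => _ g_delta _ _; apply/rowP => i.
have [vi_vertex _] := vs_vertex i; have [vj_vertex _] := vs_vertex j.
rewrite !mxE gsE; last exact: cover_vertex_union.
by rewrite (g_delta (vs i) (vs j)) // (inj_eq vs_inj) eq_sym.
Qed.

End VIFBasis.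

Theorem proposition3p8 (R : realType) (d : nat) (Y : set 'rV[R]_d)
  (Cs : seq (set 'rV[R]_d)) (k : nat) (gs : 'I_k -> 'rV[R]_d -> R) :
  polyhedral_cover Y Cs ->
  is_VIF_basis Cs gs ->
  cover_vertices Cs `<=` Y ->
  conv_hull (gvec gs @` Y) = @std_simplex R k.
Proof.
move=> [Cs_poly Y_cov _] [g [v0 [vs [g_VIF [v0_vert vs_inj] vs_vert _ gsE]]]] VY.
have Cs_convex C : C \in Cs -> is_convex C.
  by move=> /Cs_poly[/polyhedron_convex].
apply/seteqP; split.
  apply: conv_hull_sub_std_simplex => _ [y Yy <-].
  exact: (gvec_std_simplex g_VIF vs_inj vs_vert gsE Cs_convex (Y_cov y Yy)).
apply: std_simplex_sub_conv_hull => [|j].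
  exists v0; first exact: VY.
  exact: (gvec_omitted_vertex g_VIF v0_vert vs_vert gsE).
exists (vs j); first exact: VY (vs_vert j).1.
exact: (gvec_vertex g_VIF vs_inj vs_vert gsE j).
Qed.
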